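(* Let $(b,c)$ be a connected graph over a countable set $X$ with a cocompact action of a group $G$, and fix $x_0\in X$. Let $f_1,f_2\in\mathrm{Dom}(H_{b,c})$ be strictly positive, normalised by $f_1(x_0)=f_2(x_0)=1$, and multiplicative with the same character $\gamma_{f_1}=\gamma_{f_2}$. If $f_1$ is superharmonic and $f_2$ is subharmonic, then $f_1=f_2$ and both are harmonic.
   Context: A graph over $X$ is $(b,c)$ with $b:X\times X\to[0,\infty)$, $c:X\to\mathbb{R}$, $\sum_yb(x,y)<\infty$ ($b$ need not be symmetric); connected: any two points are joined by a finite sequence $y_1,\dots,y_n$ with $b(y_i,y_{i+1})>0$. $H_{b,c}f(x)=\sum_yb(x,y)(f(x)-f(y))+c(x)f(x)$ on $\mathrm{Dom}(H)=\{f:\sum_yb(x,y)|f(y)|<\infty\ \forall x\}$; $f$ is superharmonic if $Hf\ge0$, subharmonic if $Hf\le0$, harmonic if $Hf=0$. $T_gf(x)=f(g^{-1}x)$; cocompact: $GV=X$ for some finite $V$. $f$ is multiplicative with character $\gamma_f$ if $\gamma_f:G\to(0,\infty)$ is a homomorphism with $T_gf=\gamma_f(g^{-1})f$ for all $g\in G$. *)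

From HB Require Import structures.
From mathcomp Require Import all_boot all_order all_algebra.
From mathcomp Require Import monoid.
From mathcomp Require Import all_classical all_reals all_analysis.
Set Implicit Arguments. Unset Strict Implicit. Unset Printing Implicit Defensive.
Import Order.TTheory GRing.Theory Num.Theory.
Local Open Scope classical_set_scope.
Local Open Scope ring_scope.

Section GraphDefs.
Variables (R : realType) (X : countType).

(* sum over all of X of a real family: (sum of positive parts) - (sum of negative parts);
   this is the usual (absolutely convergent) sum whenever the family is summable *)
Definition rsum (F : X -> R) : R :=
  fine (\esum_(y in [set: X]) (Num.max (F y) 0)%:E)
  - fine (\esum_(y in [set: X]) (Num.max (- F y) 0)%:E).

Definition is_graph (b : X -> X -> R) (c : X -> R) : Prop :=
  (forall x y, 0 <= b x y) /\
  (forall x, (\esum_(y in [set: X]) (b x y)%:E < +oo)%E).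

Definition connected_graph (b : X -> X -> R) : Prop :=
  forall x y, exists (n : nat) (p : nat -> X),
    p 0%N = x /\ p n = y /\ (forall i, (i < n)%N -> 0 < b (p i) (p i.+1)).

Definition in_Dom (b : X -> X -> R) (f : X -> R) : Prop :=
  forall x, (\esum_(y in [set: X]) (b x y * `|f y|)%:E < +oo)%E.

Definition Hop (b : X -> X -> R) (c : X -> R) (f : X -> R) (x : X) : R :=
  rsum (fun y => b x y * (f x - f y)) + c x * f x.

Definition g_superharmonic (b : X -> X -> R) (c : X -> R) (f : X -> R) := forall x, 0 <= Hop b c f x.
Definition g_subharmonic (b : X -> X -> R) (c : X -> R) (f : X -> R) := forall x, Hop b c f x <= 0.
Definition g_harmonic (b : X -> X -> R) (c : X -> R) (f : X -> R) := forall x, Hop b c f x = 0.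

End GraphDefs.

Section GroupDefs.
Variables (R : realType) (X : countType) (G : groupType).

Definition is_action (act : G -> X -> X) : Prop :=
  (forall x, act 1%g x = x) /\ (forall g h x, act (g * h)%g x = act g (act h x)).

Definition graph_invariant (act : G -> X -> X) (b : X -> X -> R) (c : X -> R) : Prop :=
  (forall g x y, b (act g x) (act g y) = b x y) /\ (forall g x, c (act g x) = c x).

Definition cocompact (act : G -> X -> X) : Prop :=
  exists V : set X, finite_set V /\ forall x, exists g v, V v /\ x = act g v.

Definition Tg (act : G -> X -> X) (g : G) (f : X -> R) : X -> R :=
  fun x => f (act (g^-1)%g x).

Definition is_character (gamma : G -> R) : Prop :=
  (forall g, 0 < gamma g) /\ (forall g h, gamma (g * h)%g = gamma g * gamma h).

Definition multiplicative_with (act : G -> X -> X) (f : X -> R) (gamma : G -> R) : Prop :=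
  is_character gamma /\ forall g x, Tg act g f x = gamma (g^-1)%g * f x.

End GroupDefs.

(* Multiplicativity with a common character makes the ratio f2 / f1
   G-invariant, so by cocompactness it attains its maximum M at some x1.
   Then u := M f1 - f2 is nonnegative, superharmonic (H u = M H f1 - H f2),
   and vanishes at x1.  At a zero x of such a u we have
   H u x = - sum_y b(x,y) u(y) <= 0, which forces u to vanish at every
   neighbour of x; by connectedness u = 0.  Thus f2 = M f1, and the
   normalisation at x0 gives M = 1. *)

From HB Require Import structures.
From mathcomp Require Import all_boot all_order all_algebra.
From mathcomp Require Import monoid.
From mathcomp Require Import all_classical all_reals all_analysis.
From mathcomp Require Import finmap ring lra.
Set Implicit Arguments. Unset Strict Implicit. Unset Printing Implicit Defensive.
Import Order.TTheory GRing.Theory Num.Theory.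
Local Open Scope classical_set_scope.
Local Open Scope ring_scope.

Lemma esumZl (R : realType) (T : choiceType) (D : set T) (a : T -> \bar R) (k : R) :
  0 < k -> (forall i, 0 <= a i)%E ->
  (\esum_(i in D) (k%:E * a i) = k%:E * \esum_(i in D) a i)%E.
Proof.
move=> k_gt0 a_ge0; rewrite /esum -ereal_sup_pZl// image_comp.
by congr ereal_sup; apply: eq_imagel => A _ /=; rewrite ge0_mule_fsumr.
Qed.

Local Notation esumR F := (\esum_(y in [set: _]) (F y)%:E)%E.
Local Notation rsummable F := (summable [set: _] (EFin \o F)).

Section RealSums.
Variables (R : realType) (X : countType).
Implicit Types (F G P N : X -> R).

Lemma ge0_rsummable_fin_num F : (forall y, 0 <= F y) -> rsummable F ->
  esumR F \is a fin_num.
Proof.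
move=> F_ge0; rewrite summableE (@eq_esum _ _ _ _ (EFin \o F))// => y _.
by apply: gee0_abs; rewrite /= lee_fin.
Qed.

Lemma rsummable_funrpos F : rsummable F -> rsummable F^\+.
Proof. by move/summable_funepos; rewrite funerpos. Qed.

Lemma rsummable_funrneg F : rsummable F -> rsummable F^\-.
Proof. by move/summable_funeneg; rewrite funerneg. Qed.

Lemma rsummableZ (k : R) F : rsummable F -> rsummable (fun y => k * F y).
Proof.
rewrite /summable; have [->|k_neq0] := eqVneq k 0.
  by move=> _; rewrite esum1// => y _; rewrite /comp mul0r abse0.
move=> sF; under eq_esum do rewrite /comp EFinM abseM.
by rewrite esumZl ?normr_gt0// lte_mul_pinfty.
Qed.

Lemma rsummableN F : rsummable F -> rsummable (fun y => - F y).
Proof. by rewrite summableN. Qed.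

Lemma fine_esumRD P N : (forall y, 0 <= P y) -> (forall y, 0 <= N y) ->
  rsummable P -> rsummable N ->
  fine (esumR (fun y => P y + N y)) = fine (esumR P) + fine (esumR N).
Proof.
move=> P_ge0 N_ge0 sP sN; under eq_esum do rewrite EFinD.
by rewrite esumD ?fineD ?ge0_rsummable_fin_num// => y _; rewrite lee_fin.
Qed.

Lemma fine_esumRZ (k : R) P : 0 < k -> (forall y, 0 <= P y) ->
  fine (esumR (fun y => k * P y)) = k * fine (esumR P).
Proof.
move=> k_gt0 P_ge0; under eq_esum do rewrite EFinM.
rewrite esumZl//.
by case: (esumR P) => [r||]; rewrite ?gt0_muley ?gt0_muleNy ?mulr0.
Qed.

Lemma rsum_ge0 F : (forall y, 0 <= F y) -> rsum F = fine (esumR F).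
Proof.
move=> F_ge0; rewrite /rsum [E in _ - fine E]esum1 => [|y _].
  by rewrite /= subr0; congr fine; apply: eq_esum => y _; rewrite max_l.
by rewrite max_r// oppr_le0.
Qed.

Lemma rsumB_ge0 P N : (forall y, 0 <= P y) -> (forall y, 0 <= N y) ->
  rsummable P -> rsummable N ->
  rsum (fun y => P y - N y) = fine (esumR P) - fine (esumR N).
Proof.
move=> P_ge0 N_ge0 sP sN; set D := fun y => P y - N y.
have sD : rsummable D := summableB sP sN.
have := esumB sP sN (fun y _ => P_ge0 y) (fun y _ => N_ge0 y).
have -> : ((EFin \o P) \- (EFin \o N))%E = EFin \o D by [].
rewrite funerpos funerneg => /(congr1 fine).
by rewrite !fineB ?ge0_rsummable_fin_num ?rsummable_funrneg ?rsummable_funrpos.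
Qed.

Lemma rsumD F G : rsummable F -> rsummable G ->
  rsum (fun y => F y + G y) = rsum F + rsum G.
Proof.
move=> sF sG; have -> : (fun y => F y + G y) =
    (fun y => (F^\+ y + G^\+ y) - (F^\- y + G^\- y)) by exact: esym (funrDB F G).
have sDp := summableD (rsummable_funrpos sF) (rsummable_funrpos sG).
have sDn := summableD (rsummable_funrneg sF) (rsummable_funrneg sG).
rewrite rsumB_ge0 ?fine_esumRD ?rsummable_funrneg ?rsummable_funrpos// => [|y|y];
  last by rewrite addr_ge0 ?funrpos_ge0 ?funrneg_ge0.
- rewrite /rsum; lra.
- by rewrite addr_ge0 ?funrpos_ge0.
Qed.

Lemma rsumN F : rsum (fun y => - F y) = - rsum F.
Proof. by rewrite /rsum; under [E in _ - fine E]eq_esum do rewrite opprK; rewrite opprB. Qed.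

Lemma rsumB F G : rsummable F -> rsummable G ->
  rsum (fun y => F y - G y) = rsum F - rsum G.
Proof. by move=> sF sG; rewrite rsumD ?rsumN// rsummableN. Qed.

Lemma rsumZ (k : R) F : 0 < k -> rsum (fun y => k * F y) = k * rsum F.
Proof.
move=> k_gt0; have -> : rsum (fun y => k * F y) =
    fine (esumR (fun y => k * F y)^\+) - fine (esumR (fun y => k * F y)^\-) by [].
by rewrite ge0_funrposM ?ge0_funrnegM ?ltW// !fine_esumRZ// mulrBr.
Qed.

End RealSums.

Section GraphOperator.
Variables (R : realType) (X : countType) (b : X -> X -> R) (c : X -> R).
Hypothesis graph_bc : is_graph b c.

Lemma in_DomE f : in_Dom b f <-> forall x, rsummable (fun y => b x y * f y).
Proof.
have [b_ge0 _] := graph_bc.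
have row_abs x : (\esum_(y in [set: X]) `|(EFin \o (fun y => (b x y * f y)%R)) y| =
    \esum_(y in [set: X]) (b x y * `|f y|)%R%:E)%E.
  by apply: eq_esum => y _; rewrite /= normrM ger0_norm.
by split=> dom x; move: (dom x); rewrite /summable row_abs.
Qed.

Lemma in_DomZB (k : R) f g : in_Dom b f -> in_Dom b g -> in_Dom b (fun y => k * f y - g y).
Proof.
rewrite !in_DomE => df dg x.
have -> : (fun y => b x y * (k * f y - g y)) = fun y => k * (b x y * f y) - b x y * g y.
  by apply/funext => y; ring.
exact: summableB (rsummableZ k (df x)) (dg x).
Qed.

Lemma rsummable_Hop f x : in_Dom b f -> rsummable (fun y => b x y * (f x - f y)).
Proof.
have [b_ge0 b_fin] := graph_bc.
have b_row : rsummable (fun y => b x y).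
  by rewrite /summable; under eq_esum do rewrite /= ger0_norm//.
move=> /in_DomE/(_ x) df.
have -> : (fun y => b x y * (f x - f y)) = fun y => f x * b x y - b x y * f y.
  by apply/funext => y; ring.
exact: summableB (rsummableZ (f x) b_row) df.
Qed.

Lemma HopZB (k : R) f g x : 0 < k -> in_Dom b f -> in_Dom b g ->
  Hop b c (fun y => k * f y - g y) x = k * Hop b c f x - Hop b c g x.
Proof.
move=> k_gt0 df dg; rewrite /Hop.
have -> : (fun y => b x y * (k * f x - g x - (k * f y - g y))) =
    fun y => k * (b x y * (f x - f y)) - b x y * (g x - g y).
  by apply/funext => y; ring.
rewrite rsumB ?rsumZ ?rsummableZ ?rsummable_Hop//; lra.
Qed.

Lemma Hop_at_zero u x : (forall y, 0 <= u y) -> u x = 0 ->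
  Hop b c u x = - fine (esumR (fun y => b x y * u y)).
Proof.
have [b_ge0 _] := graph_bc.
move=> u_ge0 ux0; rewrite /Hop ux0 mulr0 addr0.
under eq_fun do rewrite sub0r mulrN.
by rewrite rsumN rsum_ge0// => y; rewrite mulr_ge0.
Qed.

Lemma superharmonic_ge0_zero_neighbour u x y : in_Dom b u -> (forall z, 0 <= u z) ->
  u x = 0 -> 0 <= Hop b c u x -> 0 < b x y -> u y = 0.
Proof.
have [b_ge0 _] := graph_bc.
move=> du u_ge0 ux0; rewrite Hop_at_zero// oppr_ge0 => sum_le0 bxy_gt0.
have bu_ge0 z : 0 <= b x z * u z by rewrite mulr_ge0.
have term_le : b x y * u y <= fine (esumR (fun z => b x z * u z)).
  rewrite -lee_fin fineK ?ge0_rsummable_fin_num//; last exact: (in_DomE u).1.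
  apply: esum_ge; exists [set y]; first by split; [exact: finite_set1|].
  by rewrite fsbig_set1.
apply: le_anti; rewrite u_ge0 andbT -(pmulr_rle0 _ bxy_gt0).
exact: le_trans term_le sum_le0.
Qed.

Lemma superharmonic_ge0_eq0 u x : connected_graph b -> in_Dom b u ->
  (forall y, 0 <= u y) -> g_superharmonic b c u -> u x = 0 -> forall y, u y = 0.
Proof.
move=> conn du u_ge0 super ux0 y; have [n [p [p0 [<- p_edge]]]] := conn x y.
suff : forall i, (i <= n)%N -> u (p i) = 0 by apply.
elim=> [_|i IH lt_in]; first by rewrite p0.
exact: superharmonic_ge0_zero_neighbour (IH (ltnW lt_in)) (super _) (p_edge i lt_in).
Qed.

End GraphOperator.

Lemma finite_set_argmax (T : choiceType) (d : Order.disp_t) (O : orderType d)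
    (V : set T) (h : T -> O) v :
  finite_set V -> V v -> exists2 x, V x & forall y, V y -> (h y <= h x)%O.
Proof.
move=> /finite_fsetP[B ->] vB.
have [i _ i_max] := @arg_maxP _ _ _ [` vB]%fset xpredT (h \o val) isT.
by exists (val i) => [|y yB]; [exact: valP | exact: (i_max [` yB]%fset)].
Qed.

Section Cocompact.
Variables (X : countType) (G : groupType) (act : G -> X -> X).

Lemma cocompact_invariant_argmax (d : Order.disp_t) (O : orderType d) (h : X -> O) (x0 : X) :
  cocompact act -> (forall g x, h (act g x) = h x) ->
  exists x1, forall y, (h y <= h x1)%O.
Proof.
move=> [V [finV cover]] h_inv.
have [_ [v0 [Vv0 _]]] := cover x0.
have [x1 _ x1_max] := finite_set_argmax h finV Vv0.
exists x1 => y; have [g [v [Vv ->]]] := cover y.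
by rewrite h_inv x1_max.
Qed.

Variable R : realType.

Lemma multiplicative_withE f (gamma : G -> R) : multiplicative_with act f gamma ->
  forall g x, f (act g x) = gamma g * f x.
Proof. by move=> [_ f_mul] g x; have := f_mul g^-1%g x; rewrite /Tg !invgK. Qed.

Lemma multiplicative_ratio_invariant f1 f2 (gamma : G -> R) : (forall x, 0 < f1 x) ->
  multiplicative_with act f1 gamma -> multiplicative_with act f2 gamma ->
  forall g x, f2 (act g x) / f1 (act g x) = f2 x / f1 x.
Proof.
move=> f1_gt0 m1 m2 g x; have [[gamma_gt0 _] _] := m1.
by rewrite (multiplicative_withE m1) (multiplicative_withE m2) -mulf_div divff ?mul1r// gt_eqF.
Qed.

End Cocompact.

Unset Implicit Arguments.

Theorem lemma9 (R : realType) (X : countType) (G : groupType)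
  (b : X -> X -> R) (c : X -> R) (act : G -> X -> X) (x0 : X)
  (f1 f2 : X -> R) (gamma : G -> R) :
  is_graph b c -> connected_graph b ->
  is_action act -> graph_invariant act b c -> cocompact act ->
  in_Dom b f1 -> in_Dom b f2 ->
  (forall x, 0 < f1 x) -> (forall x, 0 < f2 x) ->
  f1 x0 = 1 -> f2 x0 = 1 ->
  multiplicative_with act f1 gamma -> multiplicative_with act f2 gamma ->
  g_superharmonic b c f1 -> g_subharmonic b c f2 ->
  f1 = f2 /\ g_harmonic b c f1 /\ g_harmonic b c f2.
Proof.
move=> graph conn _ _ cocpt dom1 dom2 f1_gt0 f2_gt0 f1x0 f2x0 m1 m2 super1 sub2.
have [x1 x1_max] := cocompact_invariant_argmax x0 cocpt
  (multiplicative_ratio_invariant f1_gt0 m1 m2).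
set M := f2 x1 / f1 x1; have M_gt0 : 0 < M by rewrite divr_gt0.
set u := fun y => M * f1 y - f2 y.
have u_ge0 y : 0 <= u y by rewrite subr_ge0 -ler_pdivrMr ?x1_max.
have u_super : g_superharmonic b c u.
  by move=> x; rewrite HopZB// subr_ge0 (le_trans (sub2 x))// mulr_ge0 ?super1 ?ltW.
have u_x1 : u x1 = 0 by rewrite /u /M divfK ?subrr// gt_eqF.
have u_eq0 := superharmonic_ge0_eq0 graph conn (in_DomZB graph M dom1 dom2)
  u_ge0 u_super u_x1.
have f2E y : f2 y = M * f1 y by apply/esym/eqP; rewrite -subr_eq0 u_eq0.
have f12 : f1 = f2 by apply/funext => y; rewrite f2E -[M]mulr1 -f1x0 -f2E f2x0 !mul1r.
have harm x : Hop b c f1 x = 0 by apply/le_anti; rewrite super1 andbT f12 sub2.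
by split=> //; split=> x; rewrite -?f12 harm.
Qed.
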